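(* Every tree-cograph has no induced cycle of length more than four.
   Context: Tree-cographs are defined recursively: (1) every tree is a tree-cograph; (2) if $G$ is a tree-cograph then its complement $\bar G$ is a tree-cograph; (3) for $k\ge 2$, if $G_1,\dots,G_k$ are connected tree-cographs then their disjoint union is a tree-cograph. *)

From mathcomp Require Import all_boot.
Set Implicit Arguments. Unset Strict Implicit. Unset Printing Implicit Defensive.

(* A graph: a finite vertex type with an adjacency relation.  Simplicity
   (symmetry / irreflexivity) is imposed where needed (trees); complement and
   disjoint union preserve it. *)
Record graph := Graph { vert :> finType; adj : rel vert }.

Definition symmetric_graph (G : graph) := forall x y : G, adj x y = adj y x.
Definition irreflexive_graph (G : graph) := forall x : G, ~~ adj x x.
Definition simple_graph (G : graph) := symmetric_graph G /\ irreflexive_graph G.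

Definition connected_graph (G : graph) :=
  0 < #|G| /\ forall x y : G, connect (@adj G) x y.

Definition is_cycle (G : graph) (s : seq G) :=
  [/\ 3 <= size s, uniq s & cycle (@adj G) s].

Definition acyclic (G : graph) := forall s : seq G, ~ is_cycle s.

Definition is_tree (G : graph) := [/\ simple_graph G, connected_graph G & acyclic G].

Definition induced_cycle (G : graph) (s : seq G) :=
  is_cycle s /\
  forall x y, x \in s -> y \in s -> adj x y ->
    y = next s x \/ x = next s y.

Definition complement (G : graph) : graph :=
  @Graph G (fun x y => (x != y) && ~~ adj x y).

Definition union_adj k (F : 'I_k -> graph) : rel {i : 'I_k & vert (F i)} :=
  fun u v => (tag u == tag v) && adj (tagged u) (tagged_as u v).

Definition disj_union k (F : 'I_k -> graph) : graph :=
  @Graph {i : 'I_k & vert (F i)} (@union_adj k F).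

(* Tree-cographs, defined recursively (up to graph isomorphism, since the
   paper's graphs are considered up to isomorphism). *)
Inductive tree_cograph : graph -> Prop :=
| tc_tree G : is_tree G -> tree_cograph G
| tc_compl G : tree_cograph G -> tree_cograph (complement G)
| tc_union k (F : 'I_k -> graph) :
    2 <= k ->
    (forall i, connected_graph (F i)) ->
    (forall i, tree_cograph (F i)) ->
    tree_cograph (disj_union F)
| tc_iso (G H : graph) (f : G -> H) :
    bijective f -> (forall x y, adj (f x) (f y) = adj x y) ->
    tree_cograph G -> tree_cograph H.

From mathcomp Require Import all_boot zify.
Set Implicit Arguments. Unset Strict Implicit. Unset Printing Implicit Defensive.

(* Tree-cographs are weakly chordal: they contain no hole (induced cycle
   C_n, n >= 5) and no antihole (induced complement of such a cycle).  A hole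
   is a cycle, and an antihole contains the 5-cycle 0,2,4,1,3, so trees have
   neither.  Complementation exchanges holes and antiholes, and holes and
   antiholes are connected, so in a disjoint union each lies inside one
   component.  Finally an induced cycle of length at least 5 is a hole. *)

Definition cyc_adj n i j := (j == i.+1 %% n) || (i == j.+1 %% n).

Lemma modSn n i : i < n -> i.+1 %% n = if i.+1 == n then 0 else i.+1.
Proof.
move=> lt_in; case: eqP => [->|ne]; first by rewrite modnn.
by rewrite modn_small; lia.
Qed.

Lemma cyc_adjE n i j : i < n -> j < n -> cyc_adj n i j =
  [|| j == i.+1, (i.+1 == n) && (j == 0), i == j.+1 | (j.+1 == n) && (i == 0)].
Proof.
move=> lt_in lt_jn; rewrite /cyc_adj !modSn //.
by case: ifP => /eqP ?; case: ifP => /eqP ?; apply/idP/idP; lia.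
Qed.

Lemma next_nth_uniq (T : eqType) (s : seq T) x0 i :
  uniq s -> i < size s -> next s (nth x0 s i) = nth x0 s (i.+1 %% size s).
Proof.
move=> U lt_is; rewrite next_nth mem_nth //.
case: s U lt_is => [//|y p] U lt_is; rewrite index_uniq // modSn //.
case: eqP => [E|ne]; first by rewrite nth_default //; move: E => /= E; lia.
by rewrite /= (set_nth_default x0) //; move: lt_is ne => /= lt_is ne; lia.
Qed.

Section Holes.
Variables (T : eqType) (e : rel T).

Definition is_hole (s : seq T) :=
  [/\ uniq s, 5 <= size s &
   forall x0 i j, i < size s -> j < size s ->
     e (nth x0 s i) (nth x0 s j) = cyc_adj (size s) i j].

Definition hole_free := forall s, ~ is_hole s.

Definition compl_rel : rel T := fun x y => (x != y) && ~~ e x y.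

Lemma hole_cycle s : is_hole s -> cycle e s.
Proof.
move=> [U S H]; apply: (@sub_in_cycle _ (mem s) (frel (next s))); last first.
- exact: cycle_next.
- exact/allP.
move=> x y /(nthP x) [i lt_is <-] _ /= /eqP <-.
by rewrite next_nth_uniq // H ?ltn_pmod //; [rewrite /cyc_adj eqxx | lia].
Qed.

End Holes.

Section Antiholes.
Variables (T : eqType) (e : rel T).

Lemma antihole_adj s x0 i j : is_hole (compl_rel e) s ->
  i < size s -> j < size s -> i != j -> ~~ cyc_adj (size s) i j ->
  e (nth x0 s i) (nth x0 s j).
Proof.
move=> [U _ H] lt_is lt_js ne nc; move: (H x0 i j lt_is lt_js).
by rewrite /compl_rel nth_uniq // ne (negbTE nc) => /negbFE.
Qed.

Lemma antihole_cycle5 s : is_hole (compl_rel e) s ->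
  exists t, [/\ size t = 5, uniq t & cycle e t].
Proof.
move=> Hs; have [U S _] := Hs.
have [x0 _] : exists x0 : T, True by case: s S {U Hs} => // x _ _; exists x.
exists [:: nth x0 s 0; nth x0 s 2; nth x0 s 4; nth x0 s 1; nth x0 s 3]; split=> //.
  by rewrite /= !inE !nth_uniq //; lia.
by rewrite /= !(antihole_adj _ Hs) // ?cyc_adjE //; lia.
Qed.

Lemma const_on_nth (I : Type) (f : T -> I) s :
  (forall x0 i, i < size s -> f (nth x0 s i) = f (nth x0 s 0)) ->
  {in s &, forall x y, f x = f y}.
Proof.
by move=> Hf x y /(nthP x) [i ? <-] /(nthP x) [j ? <-]; rewrite (Hf x i) // (Hf x j).
Qed.

Section Connected.
Variables (I : Type) (f : T -> I).
Hypothesis f_adj : forall x y, e x y -> f x = f y.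

Lemma hole_const s : is_hole e s -> {in s &, forall x y, f x = f y}.
Proof.
move=> [_ S H]; apply: const_on_nth => x0; elim=> [//|i IH] lt_is.
rewrite -IH; last exact: ltnW.
by apply/esym/f_adj; rewrite H ?cyc_adjE ?eqxx //; apply: ltnW.
Qed.

(* Vertex i of an antihole is adjacent to 0 unless i is 1 or n-1; these two
   reach 0 through 3 and 2 respectively. *)
Lemma antihole_const s : is_hole (compl_rel e) s -> {in s &, forall x y, f x = f y}.
Proof.
move=> Hs; have [_ S _] := Hs; apply: const_on_nth => x0 i lt_is.
have f_far a b : a < size s -> b < size s -> a != b ->
    ~~ cyc_adj (size s) a b -> f (nth x0 s a) = f (nth x0 s b).
  by move=> *; apply: f_adj; apply: antihole_adj.
have [-> //|i0] := eqVneq i 0.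
have [->|i1] := eqVneq i 1.
  by rewrite (f_far 1 3) ?(f_far 3 0) // ?cyc_adjE //; lia.
have [->|in1] := eqVneq i (size s).-1.
  by rewrite (f_far _ 2) ?(f_far 2 0) // ?cyc_adjE //; lia.
by apply: f_far; rewrite ?cyc_adjE //; lia.
Qed.

End Connected.
End Antiholes.

Section Transfer.
Variables (T1 T2 : eqType) (e1 : rel T1) (e2 : rel T2) (g : T1 -> T2) (s : seq T1).
Hypothesis g_inj : {in s &, injective g}.
Hypothesis g_adj : {in s &, forall x y, e1 x y = e2 (g x) (g y)}.

Lemma is_hole_map : is_hole e1 s -> is_hole e2 (map g s).
Proof.
case=> U S H; split; rewrite ?map_inj_in_uniq ?size_map // => x0 i j lt_is lt_js.
case: s g_adj H lt_is lt_js => [//|y0 s'] adj_g H lt_is lt_js.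
by rewrite !(nth_map y0) // -adj_g ?mem_nth // H.
Qed.

Lemma compl_rel_map : {in s &, forall x y, compl_rel e1 x y = compl_rel e2 (g x) (g y)}.
Proof. by move=> x y xs ys; rewrite /compl_rel g_adj // (inj_in_eq g_inj). Qed.

End Transfer.

Lemma compl_relK (T : eqType) (e : rel T) :
  (forall x, ~~ e x x) -> compl_rel (compl_rel e) =2 e.
Proof.
move=> irr x y; rewrite /compl_rel negb_and negbK.
by case: eqVneq => [->|] /=; rewrite ?(negbTE (irr y)) ?negbK.
Qed.

Definition weakly_chordal (G : graph) :=
  [/\ simple_graph G, hole_free (@adj G) & hole_free (compl_rel (@adj G))].

Lemma tree_weakly_chordal G : is_tree G -> weakly_chordal G.
Proof.
move=> [SG _ Ac]; split=> // s.
  move=> Hs; apply: (Ac s); have [U S _] := Hs.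
  by split=> //; [exact: ltnW (ltnW S) | exact: hole_cycle].
by case/antihole_cycle5 => t [St Ut Ct]; apply: (Ac t); split; rewrite ?St.
Qed.

Lemma weakly_chordal_compl G : weakly_chordal G -> weakly_chordal (complement G).
Proof.
move=> [[Sy Ir] Hh Ha]; split=> //.
- by split=> [x y|x] /=; rewrite ?eqxx // eq_sym Sy.
- move=> s Hs; apply: (Hh s); rewrite -[s]map_id.
  by apply: is_hole_map Hs => // x y _ _; rewrite compl_relK.
Qed.

Lemma weakly_chordal_iso (G H : graph) (f : G -> H) :
  bijective f -> (forall x y, adj (f x) (f y) = adj x y) ->
  weakly_chordal G -> weakly_chordal H.
Proof.
move=> [g fg gf] Hf [[Sy Ir] Hh Ha].
have adj_g (x y : H) : adj x y = adj (g x) (g y) by rewrite -Hf !gf.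
have g_inj (s : seq H) : {in s &, injective g} by exact: in2W (can_inj gf).
split.
- by split=> [x y|x]; rewrite !adj_g; [apply: Sy | apply: Ir].
- by move=> s Hs; apply: (Hh (map g s)); apply: is_hole_map Hs => // x y _ _.
- move=> s Hs; apply: (Ha (map g s)); apply: is_hole_map Hs => //.
  exact: compl_rel_map.
Qed.

Section Union.
Variables (k : nat) (F : 'I_k -> graph).
Let U := disj_union F.

Lemma union_adj_tag (u v : U) : adj u v -> tag u = tag v.
Proof. by case/andP => /eqP. Qed.

Lemma union_adj_tagged_as (s : seq U) (u0 : U) : {in s, forall v, tag v = tag u0} ->
  {in s &, forall v w : U, adj v w = adj (tagged_as u0 v) (tagged_as u0 w)}.
Proof.
move=> tag_s v w /tag_s + /tag_s; case: u0 {tag_s} v w => i0 x0 [i x] [j y] /= ? ?.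
subst i j.
by rewrite /= /union_adj /= eqxx !tagged_asE.
Qed.

Lemma tagged_as_inj (s : seq U) (u0 : U) : {in s, forall v, tag v = tag u0} ->
  {in s &, injective (tagged_as u0)}.
Proof.
move=> tag_s v w /tag_s + /tag_s; case: u0 {tag_s} v w => i0 x0 [i x] [j y] /= ? ?.
subst i j.
by rewrite !tagged_asE => ->.
Qed.

Lemma simple_union : (forall i, simple_graph (F i)) -> simple_graph U.
Proof.
move=> SF; split.
- case=> i x [j y]; rewrite /= /union_adj /=.
  have [E|//] := eqVneq i j; subst j; rewrite !tagged_asE.
  by case: (SF i) => Sy _; apply: Sy.
- case=> i x; rewrite /= /union_adj /= eqxx tagged_asE.
  by case: (SF i) => _; apply.
Qed.

Lemma weakly_chordal_union : (forall i, weakly_chordal (F i)) -> weakly_chordal U.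
Proof.
move=> WF; split; first by apply: simple_union => i; case: (WF i).
- case=> [[//]|u0 s'] Hs.
  have tag_s : {in u0 :: s', forall v, tag v = tag u0}.
    by move=> v vs; apply: (hole_const union_adj_tag Hs) => //; exact: mem_head.
  case: (WF (tag u0)) => _ Hh _; apply: (Hh (map (tagged_as u0) (u0 :: s'))).
  by apply: is_hole_map Hs; [exact: tagged_as_inj tag_s | exact: union_adj_tagged_as tag_s].
- case=> [[//]|u0 s'] Hs.
  have tag_s : {in u0 :: s', forall v, tag v = tag u0}.
    by move=> v vs; apply: (antihole_const union_adj_tag Hs) => //; exact: mem_head.
  case: (WF (tag u0)) => _ _ Ha; apply: (Ha (map (tagged_as u0) (u0 :: s'))).
  apply: is_hole_map Hs; first exact: tagged_as_inj tag_s.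
  by apply: compl_rel_map; [exact: tagged_as_inj tag_s | exact: union_adj_tagged_as tag_s].
Qed.

End Union.

Lemma tree_cograph_weakly_chordal G : tree_cograph G -> weakly_chordal G.
Proof.
elim=> {G} [G|G _|k F _ _ _|G H f f_bij f_adj _].
- exact: tree_weakly_chordal.
- exact: weakly_chordal_compl.
- exact: weakly_chordal_union.
- exact: weakly_chordal_iso f_bij f_adj.
Qed.

Lemma induced_cycle_hole (G : graph) (s : seq G) :
  simple_graph G -> induced_cycle s -> 4 < size s -> is_hole (@adj G) s.
Proof.
move=> [Sy _] [[_ U C] chordless] S; split=> // x0 i j lt_is lt_js.
have n0 : 0 < size s by lia.
apply/idP/idP => [A|].
  have := chordless _ _ (mem_nth x0 lt_is) (mem_nth x0 lt_js) A.
  rewrite !next_nth_uniq //.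
  by case=> /eqP; rewrite nth_uniq ?ltn_pmod // /cyc_adj => ->; rewrite ?orbT.
have next_adj a : a < size s -> adj (nth x0 s a) (next s (nth x0 s a)).
  by move=> lt_as; apply: next_cycle C (mem_nth x0 lt_as).
rewrite /cyc_adj => /orP [] /eqP ->; rewrite -next_nth_uniq //; first exact: next_adj.
by rewrite Sy; apply: next_adj.
Qed.

Theorem lemma1 (G : graph) (s : seq G) :
  tree_cograph G -> induced_cycle s -> size s <= 4.
Proof.
move=> /tree_cograph_weakly_chordal [SG no_hole _] Is.
rewrite leqNgt; apply/negP => S.
exact: no_hole s (induced_cycle_hole SG Is S).
Qed.
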